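(* Let $P=(N,L)$ and $P'=(N',L')$ be filtration pairs for an isolated invariant set $S$. Suppose $r,s$ define a standard shift equivalence of lag $m$ from $f_P:N_L\to N_L$ to $f_{P'}:N'_{L'}\to N'_{L'}$ with semi-lags $k$ and $m-k$ respectively, and suppose $r',s'$ define another standard shift equivalence between $f_P$ and $f_{P'}$ with the same semi-lags $k$ and $m-k$. Then $r\circ f_P^m=r'\circ f_P^m$ and $s\circ f_{P'}^m=s'\circ f_{P'}^m$.
   Context: Let $X$ be a locally compact metric space, $U\subset X$ open and $f:U\to X$ continuous. A solution through $x$ is a map $\sigma:\mathbb Z\to U$ with $\sigma(0)=x$ and $f(\sigma(n))=\sigma(n+1)$ for all $n$; for $N\subset U$, $\operatorname{Inv}N$ is the set of $x\in N$ admitting a solution through $x$ with values in $N$. A compact $N\subset U$ is an isolating neighborhood if $\operatorname{Inv}N\subset\operatorname{Int}N$; $S$ is an isolated invariant set if $S=\operatorname{Inv}N$ for some isolating neighborhood $N$. The exit set is $N^-=\{x\in N:f(x)\notin\operatorname{Int}N\}$. A filtration pair for $S$ is a pair of compact sets $L\subset N$ in the interior of the domain of $f$, each the closure of its interior, with (1) $\operatorname{cl}(N\setminus L)$ an isolating neighborhood and $\operatorname{Inv}\operatorname{cl}(N\setminus L)=S$; (2) $L$ a neighborhood of $N^-$ in $N$; (3) $f(L)\cap\operatorname{cl}(N\setminus L)=\emptyset$. For a filtration pair $P=(N,L)$, $N_L=N/L$ with $L$ collapsed to the base point $[L]$ (if $L=\emptyset$, a disjoint point $[L]$ is adjoined),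 $p:N\to N_L$ the quotient map (and similarly $p':N'\to N'_{L'}$), and $f_P:N_L\to N_L$ is $f_P([L])=[L]$, $f_P(p(x))=p(f(x))$ for $x\in N\setminus L$. Continuous base-point preserving maps $r:N_L\to N'_{L'}$, $s:N'_{L'}\to N_L$ define a shift equivalence of lag $m\in\mathbb Z^+$ if $r\circ f_P=f_{P'}\circ r$, $s\circ f_{P'}=f_P\circ s$, $s\circ r=f_P^m$ and $r\circ s=f_{P'}^m$. It is a standard shift equivalence if there is an integer $0\le k\le m$ (the semi-lag of $r$) such that for every $x\in N\setminus L$ either $f^k(x)\in N'\setminus L'$ and $r(x)=p'(f^k(x))$, or $r(x)=[L']$; and analogously, for every $y\in N'\setminus L'$, either $f^{m-k}(y)\in N\setminus L$ and $s(y)=p(f^{m-k}(y))$, or $s(y)=[L]$ (so $s$ has semi-lag $m-k$). Here points of $N\setminus L$ are identified with their images in $N_L$. *)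

From HB Require Import structures.
From mathcomp Require Import all_boot all_order all_algebra.
From mathcomp Require Import all_classical all_reals all_analysis.
Set Implicit Arguments. Unset Strict Implicit. Unset Printing Implicit Defensive.
Import Order.TTheory GRing.Theory Num.Theory.
Local Open Scope classical_set_scope.

Section Conley.
Context {T : topologicalType}.
Variables (U : set T) (f : T -> T).

Definition Inv (N : set T) : set T :=
  [set x | N x /\ exists sigma : int -> T,
     [/\ sigma 0%R = x,
         (forall n : int, U (sigma n)),
         (forall n : int, f (sigma n) = sigma (n + 1)%R) &
         (forall n : int, N (sigma n))]].

Definition isolating_nbhd (N : set T) : Prop :=
  [/\ compact N, N `<=` U & Inv N `<=` interior N].

Definition isolated_invariant (S : set T) : Prop :=
  exists N, isolating_nbhd N /\ S = Inv N.

Definition exit_set (N : set T) : set T :=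
  [set x | N x /\ ~ interior N (f x)].

Definition rel_nbhd (N A B : set T) : Prop :=
  exists O, [/\ open O, A `<=` O & O `&` N `<=` B].

Definition filtration_pair (S N L : set T) : Prop :=
  [/\ [/\ compact N, compact L, L `<=` N, N `<=` interior U & L `<=` interior U],
      N = closure (interior N) /\ L = closure (interior L),
      isolating_nbhd (closure (N `\` L)) /\ Inv (closure (N `\` L)) = S,
      rel_nbhd N (exit_set N) L &
      (f @` L) `&` closure (N `\` L) = set0].

(* The pointed space N_L = N/L is modelled on option T: None is the base
   point [L], and Some x (x in N\L) is the class of x. *)
Definition pq (L : set T) (x : T) : option T :=
  if pselect (L x) then None else Some x.

Definition NL (N L : set T) : set (option T) :=
  [set a | a = None \/ exists2 x, (N `\` L) x & a = Some x].

Definition open_in (A B : set T) : Prop :=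
  exists O, open O /\ B = O `&` A.

Definition open_NL (N L : set T) (V : set (option T)) : Prop :=
  V `<=` NL N L /\ open_in N [set x | N x /\ V (pq L x)].

Definition fP (L : set T) (a : option T) : option T :=
  match a with None => None | Some x => pq L (f x) end.

Definition pointed_cont (N L N' L' : set T) (r : option T -> option T) : Prop :=
  [/\ r None = None,
      (forall a, NL N L a -> NL N' L' (r a)) &
      (forall V, open_NL N' L' V -> open_NL N L [set a | NL N L a /\ V (r a)])].

Definition shift_equiv (N L N' L' : set T) (r s : option T -> option T) (m : nat) : Prop :=
  [/\ pointed_cont N L N' L' r /\ pointed_cont N' L' N L s,
      (forall a, NL N L a -> r (fP L a) = fP L' (r a)),
      (forall a, NL N' L' a -> s (fP L' a) = fP L (s a)),
      (forall a, NL N L a -> s (r a) = iter m (fP L) a) &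
      (forall a, NL N' L' a -> r (s a) = iter m (fP L') a)].

(* r has semi-lag k: f^k(x) defined (iterates stay in U) *)
Definition semi_lag (N L N' L' : set T) (r : option T -> option T) (k : nat) : Prop :=
  forall x, (N `\` L) x ->
    ((forall j, (j < k)%N -> U (iter j f x)) /\ (N' `\` L') (iter k f x) /\
      r (Some x) = Some (iter k f x))
    \/ r (Some x) = None.

Definition std_shift_equiv (N L N' L' : set T) (r s : option T -> option T)
    (m k : nat) : Prop :=
  [/\ shift_equiv N L N' L' r s m, (k <= m)%N,
      semi_lag N L N' L' r k & semi_lag N' L' N L s (m - k)].

End Conley.

From mathcomp Require Import all_boot all_order all_algebra.
From mathcomp Require Import all_classical all_reals all_analysis.
Set Implicit Arguments. Unset Strict Implicit. Unset Printing Implicit Defensive.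
Local Open Scope classical_set_scope.

(* Two maps of the same semi-lag [k] both send [x] to [p'(f^k x)] unless they
   send it to the base point, so they agree wherever neither vanishes. Composing
   with [f_P^m = s o r] removes the remaining freedom: if [r a] is the base
   point then so is [f_P^m a = s (r a)], and otherwise
   [r (f_P^m a) = r (s (r a)) = f_P'^m (r a)] depends on [r a] only. *)

Section PointedInverse.
Variables (T : Type) (A B : set (option T)) (g h : option T -> option T).

Definition pointed_inverse_upto (r s : option T -> option T) : Prop :=
  [/\ r None = None /\ s None = None,
      (forall a, A a -> B (r a)),
      (forall a, A a -> s (r a) = g a) &
      (forall b, B b -> r (s b) = h b)].

Definition agree_off_base (r r' : option T -> option T) : Prop :=
  forall a, A a -> [\/ r a = None, r' a = None | r a = r' a].

Lemma pointed_inverse_base r s a :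
  pointed_inverse_upto r s -> A a -> r a = None -> g a = None.
Proof. by case=> [[_ s0] _ sr _] Aa ra0; rewrite -sr // ra0. Qed.

Lemma pointed_inverse_intertwine r s a :
  pointed_inverse_upto r s -> A a -> r (g a) = h (r a).
Proof. by case=> _ rAB sr rs Aa; rewrite -sr // rs //; apply: rAB. Qed.

Lemma pointed_inverse_agree r s r' s' :
  pointed_inverse_upto r s -> pointed_inverse_upto r' s' ->
  agree_off_base r r' -> forall a, A a -> r (g a) = r' (g a).
Proof.
move=> rs r's' agree a Aa.
have [[r0 _] _ _ _] := rs; have [[r'0 _] _ _ _] := r's'.
case: (agree a Aa) => [ra0 | r'a0 | rr'].
- by rewrite (pointed_inverse_base rs Aa ra0) r0 r'0.
- by rewrite (pointed_inverse_base r's' Aa r'a0) r0 r'0.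
- by rewrite (pointed_inverse_intertwine rs Aa) (pointed_inverse_intertwine r's' Aa) rr'.
Qed.

End PointedInverse.

Section ShiftEquivalence.
Context {T : topologicalType}.
Variables (U : set T) (f : T -> T).

Lemma shift_equiv_pointed_inverse N L N' L' r s m :
  shift_equiv f N L N' L' r s m ->
  pointed_inverse_upto (NL N L) (NL N' L') (iter m (fP f L)) (iter m (fP f L')) r s /\
  pointed_inverse_upto (NL N' L') (NL N L) (iter m (fP f L')) (iter m (fP f L)) s r.
Proof. by case=> [[[r0 rAB _] [s0 sBA _]] _ _ sr rs]; split; split. Qed.

Lemma semi_lag_agree_off_base N L N' L' r r' k :
  r None = None ->
  semi_lag U f N L N' L' r k -> semi_lag U f N L N' L' r' k ->
  agree_off_base (NL N L) r r'.
Proof.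
move=> r0 lag lag' _ [->|[x NLx ->]]; first by constructor 1.
case: (lag x NLx) => [[_ [_ ->]] | ->]; last by constructor 1.
by case: (lag' x NLx) => [[_ [_ ->]] | ->]; constructor.
Qed.

End ShiftEquivalence.

Theorem mainTheorem20 (R : realType) (X : pseudoMetricType R)
  (Xhaus : hausdorff_space X) (Xlc : locally_compact [set: X])
  (U : set X) (f : X -> X) (Uopen : open U) (fcont : {within U, continuous f})
  (S : set X) (Siso : isolated_invariant U f S)
  (N L N' L' : set X)
  (P : filtration_pair U f S N L) (P' : filtration_pair U f S N' L')
  (r s r' s' : option X -> option X) (m k : nat)
  (E : std_shift_equiv U f N L N' L' r s m k)
  (E' : std_shift_equiv U f N L N' L' r' s' m k) :
  (forall a, NL N L a -> r (iter m (fP f L) a) = r' (iter m (fP f L) a)) /\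
  (forall b, NL N' L' b -> s (iter m (fP f L') b) = s' (iter m (fP f L') b)).
Proof.
case: E => [SE _ lag_r lag_s]; case: E' => [SE' _ lag_r' lag_s'].
have [rs sr] := shift_equiv_pointed_inverse SE.
have [r's' s'r'] := shift_equiv_pointed_inverse SE'.
have [[r0 s0] _ _ _] := rs.
split; apply: pointed_inverse_agree.
- exact: rs.
- exact: r's'.
- exact: semi_lag_agree_off_base r0 lag_r lag_r'.
- exact: sr.
- exact: s'r'.
- exact: semi_lag_agree_off_base s0 lag_s lag_s'.
Qed.
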